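(* Let $a, b$ be natural numbers with $a, b > 0$, and let $d > 1$ be a natural number. (1) $a$ and $b$ are relatively prime if and only if there are $r, s \in \mathbb{N}_0$ such that $(a-1)(b-1) = ra + sb$. (2) Suppose $a$ and $b$ are divisible by $d$. Then $\gcd(a,b) = d$ if and only if there are $r, s \in \mathbb{N}_0$ such that $d(a/d - 1)(b/d - 1) = ra + sb$.
   Context: $\mathbb{N}_0$ denotes the set of natural numbers including $0$. *)

From mathcomp Require Import all_boot.

From mathcomp Require Import all_boot.
From mathcomp Require Import zify.

(* Writing a + b + (a - 1)(b - 1) = ab + 1, a common divisor of a and b that
   divides (a - 1)(b - 1) must divide 1.  Conversely, if a and b are coprime,
   Bezout gives ka = 1 + ub with k >= 1 and u < a, whence
   (a - 1)(b - 1) = (k - 1)a + (a - 1 - u)b.  Part (2) is part (1) applied to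
   a/d and b/d, since both sides of it scale by d. *)

Section FrobeniusRepresentation.

Variables a b : nat.
Hypotheses (a_gt0 : 0 < a) (b_gt0 : 0 < b).

Lemma coprime_frobenius_repr :
  coprime a b -> exists r s : nat, (a - 1) * (b - 1) = r * a + s * b.
Proof.
rewrite /coprime => /eqP gcd1.
have [u lt_u_a] := Bezoutl b a_gt0.
rewrite gcd1 => /dvdnP[k def_ka].
have k_gt0 : 0 < k by case: k def_ka => [|k]; lia.
by exists (k - 1), (a - 1 - u); nia.
Qed.

Lemma frobenius_repr_coprime r s :
  (a - 1) * (b - 1) = r * a + s * b -> coprime a b.
Proof.
move=> def_ab1; rewrite /coprime -dvdn1.
set g := gcdn a b.
have [g_a g_b] : g %| a /\ g %| b by rewrite dvdn_gcdl dvdn_gcdr.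
have g_ab1 : g %| (a - 1) * (b - 1) by rewrite def_ab1 dvdn_add // dvdn_mull.
have -> : 1 = (a - 1) * (b - 1) + a + b - a * b by nia.
by rewrite dvdn_sub ?dvdn_mulr // !dvdn_add.
Qed.

Lemma coprime_iff_frobenius_repr :
  coprime a b <-> exists r s : nat, (a - 1) * (b - 1) = r * a + s * b.
Proof.
split; first exact: coprime_frobenius_repr.
by case=> r [s]; apply: frobenius_repr_coprime.
Qed.

End FrobeniusRepresentation.

Lemma gcdn_pmulr_eq (a b d : nat) :
  0 < d -> (gcdn (a * d) (b * d) = d <-> coprime a b).
Proof.
move=> d_gt0; rewrite -muln_gcdl /coprime -(eqn_pmul2r d_gt0) mul1n.
by split=> [-> | /eqP].
Qed.

Lemma repr_pmulr_iff (n a b d : nat) : 0 < d ->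
  (exists r s : nat, d * n = r * (a * d) + s * (b * d)) <->
  (exists r s : nat, n = r * a + s * b).
Proof.
move=> d_gt0; split=> -[r [s def_n]]; exists r, s.
- by apply/eqP; rewrite -(eqn_pmul2l d_gt0) def_n; apply/eqP; lia.
- by rewrite def_n; lia.
Qed.

Theorem theorem4p11 (a b d : nat) (ha : 0 < a) (hb : 0 < b) (hd : 1 < d) :
  (coprime a b <-> exists r s : nat, (a - 1) * (b - 1) = r * a + s * b) /\
  (d %| a -> d %| b -> (
     (gcdn a b = d <->
      exists r s : nat, d * (a %/ d - 1) * (b %/ d - 1) = r * a + s * b))).
Proof.
split; first exact: coprime_iff_frobenius_repr.
move=> d_a d_b; have d_gt0 : 0 < d by lia.
have a'_gt0 : 0 < a %/ d by rewrite divn_gt0 // dvdn_leq.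
have b'_gt0 : 0 < b %/ d by rewrite divn_gt0 // dvdn_leq.
rewrite -{1 3}(divnK d_a) -{1 3}(divnK d_b) -mulnA repr_pmulr_iff //.
by rewrite gcdn_pmulr_eq // coprime_iff_frobenius_repr.
Qed.
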